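(* For every bipartite quantum channel $\mathcal{N}\in\mathrm{Ch}(A'B',AB)$, \[ S^{\downarrow}_{\infty}(R_AA|R_BB)_{\Phi^{\mathcal{N}}}-\log|A'|\ \le\ S_{\infty}[A|B]_{\mathcal{N}}\ \le\ S_{\infty}(R_AA|R_BB)_{\Phi^{\mathcal{N}}}-\log|A'|. \]
   Context: All systems are finite-dimensional; $|X|$ denotes dimension; $\log$ is base 2. $\mathrm{St}(X)$ is the set of density operators, $\mathrm{Ch}(X',X)$ the set of quantum channels. Maximally entangled state: $\Phi_{RX}:=\frac1d\sum_{i,j=0}^{d-1}|ii\rangle\langle jj|$ with $R\simeq X$, $d=|X|$. The Choi state of $\mathcal{N}\in\mathrm{Ch}(A'B',AB)$ is $\Phi^{\mathcal{N}}_{R_AAR_BB}:=(\mathrm{id}_{R_AR_B}\otimes\mathcal{N})(\Phi_{R_AA'}\otimes\Phi_{R_BB'})$, $R_A\simeq A'$, $R_B\simeq B'$. $\mathcal{R}^{\mathbb 1}_{A'\to A}(X):=\operatorname{tr}(X)\mathbb 1_A$. $D_\infty(\rho\|\sigma):=\log\inf\{\lambda\ge0:\rho\le\lambda\sigma\}$; for a channel $\mathcal{M}$ and CP map $\mathcal{M}'$ with the same input $X'$, $D_\infty[\mathcal{M}\|\mathcal{M}']:=\sup_{\rho\in\mathrm{St}(RX')}D_\infty((\mathrm{id}_R\otimes\mathcal{M})(\rho)\|(\mathrm{id}_R\otimes\mathcal{M}')(\rho))$. Conditional channel min-entropy: $S_\infty[A|B]_{\mathcal{N}}:=-\inf_{\mathcal{Q}\in\mathrm{Ch}(B',B)}D_\infty[\mathcal{N}\|\mathcal{R}^{\mathbb1}_{A'\to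 A}\otimes\mathcal{Q}_{B'\to B}]$. For a bipartite state $\rho_{XY}$: $S_\infty(X|Y)_\rho:=-\inf_{\sigma\in\mathrm{St}(Y)}D_\infty(\rho_{XY}\|\mathbb1_X\otimes\sigma_Y)$ and $S^\downarrow_\infty(X|Y)_\rho:=-D_\infty(\rho_{XY}\|\mathbb1_X\otimes\rho_Y)$. *)

From HB Require Import structures.
From mathcomp Require Import all_boot all_order all_algebra.
From mathcomp Require Import complex mxtens.
From mathcomp Require Import boolp classical_sets reals ereal exp.

Set Implicit Arguments.
Unset Strict Implicit.
Unset Printing Implicit Defensive.

Import Order.TTheory GRing.Theory Num.Theory.
Local Open Scope ring_scope.
Local Open Scope classical_set_scope.

Section QuantumDefs.
Variable R : realType.
Local Notation C := (R[i]).

Definition log2 (x : R) : R := ln x / ln 2.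

Definition adjmx m n (A : 'M[C]_(m, n)) : 'M[C]_(n, m) :=
  (map_mx (fun z : C => conjc z) A)^T.

Definition psd n (A : 'M[C]_n) : Prop :=
  forall v : 'cV[C]_n, 0 <= (adjmx v *m A *m v) 0 0.

Definition loewner_le n (A B : 'M[C]_n) : Prop := psd (B - A).

Definition is_state n (rho : 'M[C]_n) : Prop := psd rho /\ \tr rho = 1.

(* composite index of system XY with |X| = m, |Y| = n (convention of tensmx) *)
Definition tidx m n (i : 'I_m) (j : 'I_n) : 'I_(m * n) := mxtens_index (i, j).

Definition block m n (X : 'M[C]_(m * n)) (i j : 'I_m) : 'M[C]_n :=
  \matrix_(k, l) X (tidx i k) (tidx j l).

Definition tensmap n1 m1 n2 m2 (M1 : 'M[C]_n1 -> 'M[C]_m1)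
    (M2 : 'M[C]_n2 -> 'M[C]_m2) : 'M[C]_(n1 * n2) -> 'M[C]_(m1 * m2) :=
  fun X => \sum_(i < n1) \sum_(j < n1) (M1 (delta_mx i j) *t M2 (block X i j)).

Definition idmap n : 'M[C]_n -> 'M[C]_n := fun X => X.

Definition is_linear_map n m (M : 'M[C]_n -> 'M[C]_m) : Prop :=
  forall (a : C) X Y, M (a *: X + Y) = a *: M X + M Y.

Definition positive_map n m (M : 'M[C]_n -> 'M[C]_m) : Prop :=
  forall X, psd X -> psd (M X).

Definition completely_positive n m (M : 'M[C]_n -> 'M[C]_m) : Prop :=
  forall k : nat, positive_map (tensmap (@idmap k) M).

Definition trace_preserving n m (M : 'M[C]_n -> 'M[C]_m) : Prop :=
  forall X, \tr (M X) = \tr X.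

Definition is_channel n m (M : 'M[C]_n -> 'M[C]_m) : Prop :=
  [/\ is_linear_map M, completely_positive M & trace_preserving M].

Definition replacer1 n m : 'M[C]_n -> 'M[C]_m := fun X => (\tr X)%:M.

Definition ptrace1 m n (X : 'M[C]_(m * n)) : 'M[C]_n := \sum_(i < m) block X i i.

Definition maxent d : 'M[C]_(d * d) :=
  (d%:R)^-1 *: \sum_(i < d) \sum_(j < d) delta_mx (tidx i i) (tidx j j).

(* reordering (PQ)(RS) -> (PR)(QS) of tensor factors *)
Definition swapmid_idx p q r s (u : 'I_((p * r) * (q * s))) : 'I_((p * q) * (r * s)) :=
  let: (pr, qs) := mxtens_unindex u in
  let: (i, k) := mxtens_unindex pr in
  let: (j, l) := mxtens_unindex qs in
  tidx (tidx i j) (tidx k l).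

Definition swapmid p q r s (X : 'M[C]_((p * q) * (r * s))) : 'M[C]_((p * r) * (q * s)) :=
  \matrix_(u, v) X (swapmid_idx u) (swapmid_idx v).

(* Choi state Phi^N_{R_A A R_B B} of N in Ch(A'B', AB), as a bipartite
   operator on (R_A A)(R_B B):
   (id_{R_A R_B} (x) N)(Phi_{R_A A'} (x) Phi_{R_B B'}), with tensor factors
   reordered so that N acts on A'B'. *)
Definition choi a' b' a b (N : 'M[C]_(a' * b') -> 'M[C]_(a * b))
    : 'M[C]_((a' * a) * (b' * b)) :=
  swapmid (tensmap (@idmap (a' * b')) N (swapmid (maxent a' *t maxent b'))).

Local Open Scope ereal_scope.

(* max-relative entropy D_infty(rho||sigma) = log inf {lam >= 0 : rho <= lam sigma}
   (inf of the empty set = +oo, log 0 = -oo) *)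
Definition Dmax n (rho sigma : 'M[C]_n) : \bar R :=
  ereal_inf [set (log2 lam)%:E | lam in
               [set lam : R | (0 < lam)%R /\ loewner_le rho ((lam%:C)%C *: sigma)]].

Definition Dmax_ch n m (M M' : 'M[C]_n -> 'M[C]_m) : \bar R :=
  ereal_sup [set x | exists (k : nat) (rho : 'M[C]_(k * n)),
     is_state rho /\ x = Dmax (tensmap (@idmap k) M rho) (tensmap (@idmap k) M' rho)].

Definition Smin_ch a' b' a b (N : 'M[C]_(a' * b') -> 'M[C]_(a * b)) : \bar R :=
  - ereal_inf [set Dmax_ch N (tensmap (@replacer1 a' a) Q) |
                 Q in [set Q : 'M[C]_b' -> 'M[C]_b | is_channel Q]].

Definition Smin x y (rho : 'M[C]_(x * y)) : \bar R :=
  - ereal_inf [set Dmax rho (1%:M *t sigma) | sigma in [set s : 'M[C]_y | is_state s]].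

Definition Smin_down x y (rho : 'M[C]_(x * y)) : \bar R :=
  - Dmax rho (1%:M *t ptrace1 rho).

End QuantumDefs.

(* The Choi state of N is, up to the factor 1/(|A'||B'|) and a reordering of
   tensor factors, the Choi matrix J(N) = (id ⊗ N)(|Ω><Ω|), Ω = Σ_i |ii>, and by
   Choi's theorem a Loewner inequality J(N) ≤ λ J(M) between Choi matrices
   yields (id_R ⊗ N)(ρ) ≤ λ (id_R ⊗ M)(ρ) for every input ρ.
   Upper bound: for a channel Q, the inequality N ≤ λ (R^1 ⊗ Q) tested on the
   maximally entangled input reads Φ^N ≤ (λ/|A'|) 1 ⊗ J(Q)/|B'|, and J(Q)/|B'| is
   a state.
   Lower bound: the R_B B marginal of Φ^N is J(Q0)/|B'| for the channel
   Q0(X) = tr_A N(1/|A'| ⊗ X), so Φ^N ≤ λ 1 ⊗ Φ^N_{R_B B} means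
   J(N) ≤ λ|A'| J(R^1 ⊗ Q0), i.e. N ≤ λ|A'| (R^1 ⊗ Q0) on every input. *)

From HB Require Import structures.
From mathcomp Require Import all_boot all_order all_algebra.
From mathcomp Require Import complex mxtens.
From mathcomp Require Import boolp classical_sets reals ereal exp.
From mathcomp Require Import ring.

Set Implicit Arguments.
Unset Strict Implicit.
Unset Printing Implicit Defensive.
Import Order.TTheory GRing.Theory Num.Theory.
Local Open Scope ring_scope.

Section QuantumChannels.
Variable R : realType.
Local Notation C := (R[i]).

(** * Tensor indices *)

Lemma tidx_ind m n (P : 'I_(m * n) -> Prop) :
  (forall i j, P (tidx i j)) -> forall u, P u.
Proof. by move=> PT u; case: (mxtens_indexP u). Qed.

Lemma tidx_eq m n (i i' : 'I_m) (j j' : 'I_n) :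
  (tidx i j == tidx i' j') = (i == i') && (j == j').
Proof. by rewrite (inj_eq (can_inj (@mxtens_indexK m n))) xpair_eqE. Qed.

Lemma tidxK m n (i : 'I_m) (j : 'I_n) : mxtens_unindex (tidx i j) = (i, j).
Proof. exact: mxtens_indexK. Qed.

Lemma sum_tidx m n (F : 'I_(m * n) -> C) :
  \sum_u F u = \sum_(i < m) \sum_(j < n) F (tidx i j).
Proof.
rewrite [RHS]pair_big (reindex (@mxtens_index m n)) /=; first by apply: eq_bigr => -[].
by exists (@mxtens_unindex m n) => u _; rewrite (mxtens_indexK, mxtens_unindexK).
Qed.

Lemma tensmx_tidx m n p q (A : 'M[C]_(m, n)) (B : 'M[C]_(p, q)) i j k l :
  (A *t B) (tidx i j) (tidx k l) = A i k * B j l.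
Proof. exact: tensmxE. Qed.

Lemma tens1mx_tidx k m m' (Y : 'M[C]_(m, m')) (i j : 'I_k) p q :
  (1%:M *t Y) (tidx i p) (tidx j q) = (i == j)%:R * Y p q.
Proof. by rewrite tensmx_tidx mxE. Qed.

Lemma block_tidx m n (X : 'M[C]_(m * n)) i j k l :
  block X i j k l = X (tidx i k) (tidx j l).
Proof. by rewrite mxE. Qed.

Lemma sum_delta_l n (i : 'I_n) (g : 'I_n -> C) :
  \sum_j ((i == j)%:R * g j) = g i.
Proof.
rewrite (bigD1 i) //= eqxx mul1r big1 ?addr0 // => j /negPf.
by rewrite eq_sym => ->; rewrite mul0r.
Qed.

Lemma sum_delta_r n (i : 'I_n) (g : 'I_n -> C) :
  \sum_j (g j * (j == i)%:R) = g i.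
Proof.
by under eq_bigr do rewrite mulrC eq_sym; exact: sum_delta_l.
Qed.

Lemma swapmid_tidx p q r s (X : 'M[C]_((p * q) * (r * s))) i j k l i' j' k' l' :
  swapmid X (tidx (tidx i k) (tidx j l)) (tidx (tidx i' k') (tidx j' l'))
  = X (tidx (tidx i j) (tidx k l)) (tidx (tidx i' j') (tidx k' l')).
Proof. by rewrite mxE /swapmid_idx !tidxK. Qed.

Lemma swapmidK p q r s (X : 'M[C]_((p * q) * (r * s))) : swapmid (swapmid X) = X.
Proof.
apply/matrixP => u v.
elim/tidx_ind: u => u1 u2; elim/tidx_ind: u1 => i j; elim/tidx_ind: u2 => k l.
elim/tidx_ind: v => v1 v2; elim/tidx_ind: v1 => i' j'; elim/tidx_ind: v2 => k' l'.
by rewrite !swapmid_tidx.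
Qed.

Lemma swapmidZ p q r s (c : C) (X : 'M[C]_((p * q) * (r * s))) :
  swapmid (c *: X) = c *: swapmid X.
Proof. by apply/matrixP => u v; rewrite !mxE. Qed.

Lemma swapmidB p q r s (X Y : 'M[C]_((p * q) * (r * s))) :
  swapmid (X - Y) = swapmid X - swapmid Y.
Proof. by apply/matrixP => u v; rewrite !mxE. Qed.

Lemma tensmxZr m n p q (A : 'M[C]_(m, n)) (c : C) (B : 'M[C]_(p, q)) :
  A *t (c *: B) = c *: (A *t B).
Proof. by apply/matrixP => u v; rewrite !mxE mulrCA. Qed.

Lemma tensmxDr m n p q (A : 'M[C]_(m, n)) (B B' : 'M[C]_(p, q)) :
  A *t (B + B') = A *t B + A *t B'.
Proof. by apply/matrixP => u v; rewrite !mxE mulrDr. Qed.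

(** * Positive semidefinite matrices *)

Lemma adjmxE m n (A : 'M[C]_(m, n)) i j : adjmx A i j = (A j i)^*.
Proof. by rewrite !mxE. Qed.

Lemma adjmxM m n p (A : 'M[C]_(m, n)) (B : 'M[C]_(n, p)) :
  adjmx (A *m B) = adjmx B *m adjmx A.
Proof. by rewrite /adjmx map_mxM trmx_mul. Qed.

Lemma qform_sum n (v : 'cV[C]_n) (A : 'M[C]_n) :
  (adjmx v *m A *m v) 0 0 = \sum_a \sum_b ((v a 0)^* * A a b * v b 0).
Proof.
rewrite mxE exchange_big; apply: eq_bigr => b _.
by rewrite mxE mulr_suml; apply: eq_bigr => a _; rewrite !mxE.
Qed.

Lemma qform_delta n (A : 'M[C]_n) a b :
  (adjmx (delta_mx a 0 : 'cV[C]_n) *m A *m (delta_mx b 0 : 'cV[C]_n)) 0 0 = A a b.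
Proof.
have -> : adjmx (delta_mx a 0 : 'cV[C]_n) = delta_mx 0 a.
  by apply/matrixP => i j; rewrite adjmxE !mxE conjC_nat andbC.
by rewrite -rowE -colE !mxE.
Qed.

Lemma psd0 n : psd (0 : 'M[C]_n).
Proof. by move=> v; rewrite mulmx0 mul0mx mxE. Qed.

Lemma psdD n (A B : 'M[C]_n) : psd A -> psd B -> psd (A + B).
Proof. by move=> psdA psdB v; rewrite mulmxDr mulmxDl mxE addr_ge0. Qed.

Lemma psd_sum n (I : finType) (P : pred I) (F : I -> 'M[C]_n) :
  (forall i, P i -> psd (F i)) -> psd (\sum_(i | P i) F i).
Proof. by move=> psdF; elim/big_ind: _ => //; [exact: psd0 | exact: psdD]. Qed.

Lemma psdZ n (c : C) (A : 'M[C]_n) : 0 <= c -> psd A -> psd (c *: A).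
Proof. by move=> c_ge0 psdA v; rewrite -scalemxAr -scalemxAl mxE mulr_ge0. Qed.

Lemma psd_congruence m n (A : 'M[C]_m) (W : 'M[C]_(m, n)) :
  psd A -> psd (adjmx W *m A *m W).
Proof. by move=> psdA v; have := psdA (W *m v); rewrite adjmxM !mulmxA. Qed.

Lemma psd_reindex m n (A : 'M[C]_m) (f : 'I_n -> 'I_m) :
  psd A -> psd (\matrix_(u, v) A (f u) (f v)).
Proof.
pose W : 'M[C]_(m, n) := \matrix_(a, u) (f u == a)%:R.
suff -> : \matrix_(u, v) A (f u) (f v) = adjmx W *m A *m W by exact: psd_congruence.
apply/matrixP => u v; rewrite !mxE -(sum_delta_r (f v) (A (f u))).
apply: eq_bigr => b _; rewrite !mxE eq_sym -(sum_delta_l (f u) (A^~ b)).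
by congr (_ * _); apply: eq_bigr => a _; rewrite adjmxE !mxE conjC_nat.
Qed.

Lemma psd_rank1 n (x : 'I_n -> C) : psd (\matrix_(a, b) ((x a)^* * x b)).
Proof.
move=> v; rewrite qform_sum.
set s := \sum_b (x b * v b 0).
suff -> : \sum_a \sum_b ((v a 0)^* * (\matrix_(a, b) ((x a)^* * x b)) a b * v b 0)
          = s * s^* by exact: mul_conjC_ge0.
rewrite mulrC rmorph_sum mulr_suml; apply: eq_bigr => a _.
rewrite mulr_sumr; apply: eq_bigr => b _; rewrite mxE rmorphM /=.
by rewrite -!mulrA mulrCA.
Qed.

Lemma loewner_leZ n (c : C) (A B : 'M[C]_n) :
  0 <= c -> loewner_le A B -> loewner_le (c *: A) (c *: B).
Proof. by move=> c_ge0 AB; rewrite /loewner_le -scalerBr; exact: psdZ. Qed.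

Lemma psd_swapmid p q r s (X : 'M[C]_((p * q) * (r * s))) : psd X -> psd (swapmid X).
Proof. exact: psd_reindex. Qed.

Lemma loewner_le_swapmid p q r s (X Y : 'M[C]_((p * q) * (r * s))) :
  loewner_le X Y -> loewner_le (swapmid X) (swapmid Y).
Proof. by rewrite /loewner_le -swapmidB; exact: psd_swapmid. Qed.

Lemma psd_ptrace1 m n (X : 'M[C]_(m * n)) : psd X -> psd (ptrace1 X).
Proof. by move=> psdX; apply: psd_sum => i _; exact: psd_reindex. Qed.

(* Polarization: the quadratic form of a psd matrix is real on [e_a + x e_b]
   for [x = 1] and [x = 'i], which forces [A b a = (A a b)^*]. *)
Lemma psd_hermitian n (A : 'M[C]_n) : psd A -> forall a b, A b a = (A a b)^*.
Proof.
move=> psdA a b.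
pose e c : 'cV[C]_n := delta_mx c 0.
have qform_pair x : (adjmx (e a + x *: e b) *m A *m (e a + x *: e b)) 0 0
    = A a a + x * A a b + x^* * A b a + x^* * x * A b b.
  have -> : adjmx (e a + x *: e b) = adjmx (e a) + x^* *: adjmx (e b).
    by apply/matrixP => i j; rewrite !mxE rmorphD rmorphM.
  rewrite !mulmxDl !mulmxDr -!scalemxAl -!scalemxAr.
  rewrite ![fun_of_matrix (_ + _) 0 0]mxE ![fun_of_matrix (_ *: _) 0 0]mxE.
  by rewrite !qform_delta; ring.
have real_pair x : (A a a + x * A a b + x^* * A b a + x^* * x * A b b)^*
                   - (A a a + x * A a b + x^* * A b a + x^* * x * A b b) = 0.
  by apply/eqP; rewrite subr_eq0; apply/eqP/CrealP/ger0_real; rewrite -qform_pair.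
have real_diag c : (A c c)^* = A c c.
  by apply/CrealP/ger0_real; rewrite -qform_delta.
have := real_pair 1; have := real_pair 'i.
rewrite !rmorphD !rmorphM /= !conjCK !real_diag conjC1 conjCi.
move=> E2 E1; set X1 := (X in X = 0) in E1; set X2 := (X in X = 0) in E2.
have : 2 * 'i * (A b a - (A a b)^*) = X2 - 'i * X1 by rewrite /X1 /X2; ring.
rewrite E1 E2 mulr0 subr0 => /eqP; rewrite !mulf_eq0 pnatr_eq0 (negbTE (@neq0Ci C)).
by rewrite subr_eq0 => /eqP.
Qed.

Section Gram.
Local Open Scope sesquilinear_scope.

(* Spectral decomposition [A = P^* diag d P] with [d >= 0]; take [B = diag (sqrt d) P]. *)
Lemma psd_gram n (A : 'M[C]_n) : psd A ->
  exists B : 'M[C]_n, forall a b, A a b = \sum_t (B t a)^* * B t b.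
Proof.
move=> psdA.
have A_herm : A^t* = A.
  by apply/matrixP => a b; rewrite !mxE (psd_hermitian psdA b a).
have /orthomx_spectralP spectralA : A \is normalmx by apply/normalmxP; rewrite A_herm.
set P := spectralmx A in spectralA; set d := spectral_diag A in spectralA.
have P_unitary : P \is unitarymx by exact: spectral_unitarymx.
rewrite invmx_unitary // in spectralA.
have PPt : P *m P^t* = 1%:M by apply/unitarymxP.
have d_ge0 i : 0 <= d 0 i.
  have := psdA (P^t* *m delta_mx i 0).
  rewrite adjmxM spectralA !mulmxA.
  have -> : adjmx (P^t*) = P by apply/matrixP => x y; rewrite adjmxE !mxE conjCK.
  rewrite -(mulmxA _ P) PPt mulmx1 -(mulmxA _ P (P^t*)) PPt mulmx1.
  by rewrite qform_delta mxE eqxx mulr1n.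
pose s : 'rV[C]_n := \row_i sqrtC (d 0 i).
exists (diag_mx s *m P) => a b.
have -> : \sum_t ((diag_mx s *m P) t a)^* * (diag_mx s *m P) t b =
   ((diag_mx s *m P)^t* *m (diag_mx s *m P)) a b.
  by rewrite mxE; apply: eq_bigr => t _; rewrite !mxE.
rewrite trmx_mul map_mxM tr_diag_mx map_diag_mx.
have -> : map_mx (@Num.conj C) s = s.
  by apply/matrixP => x y; rewrite !mxE conj_Creal // sqrtC_real.
rewrite mulmxA -[_ *m diag_mx s *m diag_mx s]mulmxA mulmx_diag.
have -> : \row_j (s 0 j * s 0 j) = d.
  by apply/matrixP => x y; rewrite !mxE ord1 -expr2 sqrtCK.
by rewrite -spectralA.
Qed.

End Gram.

(** * Choi matrices *)

(* [omega_mx n] is |Ω><Ω| for Ω = Σ_i |ii>, so [choi_mx M] is the unnormalised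
   Choi matrix J(M) of the header. *)
Definition omega_mx n : 'M[C]_(n * n) :=
  \sum_(i < n) \sum_(j < n) delta_mx (tidx i i) (tidx j j).

Definition choi_mx n m (M : 'M[C]_n -> 'M[C]_m) : 'M[C]_(n * m) :=
  tensmap (@idmap R n) M (omega_mx n).

Lemma maxentE d : maxent R d = (d%:R)^-1 *: omega_mx d.
Proof. by []. Qed.

Lemma omega_mxE n (i k j l : 'I_n) :
  omega_mx n (tidx i k) (tidx j l) = (i == k)%:R * (j == l)%:R.
Proof.
rewrite summxE (eq_bigr (fun i' => (i == i')%:R * ((k == i')%:R * (j == l)%:R))).
  by rewrite sum_delta_l eq_sym.
move=> i' _; rewrite summxE (eq_bigr (fun j' =>
  (i == i')%:R * (k == i')%:R * ((j == j')%:R * (l == j')%:R))).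
  by rewrite -mulr_sumr sum_delta_l [l == j]eq_sym mulrA.
by move=> j' _; rewrite mxE !tidx_eq -!mulnb !natrM.
Qed.

Lemma block_omega_mx n (i j : 'I_n) : block (omega_mx n) i j = delta_mx i j.
Proof.
apply/matrixP => k l; rewrite block_tidx omega_mxE mxE.
by rewrite -natrM mulnb [k == i]eq_sym [l == j]eq_sym.
Qed.

Lemma psd_omega_mx n : psd (omega_mx n).
Proof.
pose x (u : 'I_(n * n)) : C := ((mxtens_unindex u).1 == (mxtens_unindex u).2)%:R.
suff -> : omega_mx n = \matrix_(u, v) ((x u)^* * x v) by exact: psd_rank1.
apply/matrixP => u v; elim/tidx_ind: u => i k; elim/tidx_ind: v => j l.
by rewrite omega_mxE mxE /x !tidxK conjC_nat.
Qed.

Lemma mxtrace_omega_mx n : \tr (omega_mx n) = n%:R.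
Proof.
rewrite /mxtrace sum_tidx -[n in RHS]card_ord -sumr_const; apply: eq_bigr => i _.
rewrite (bigD1 i) //= omega_mxE eqxx mulr1 big1 ?addr0 // => j /negPf ne_ji.
by rewrite omega_mxE eq_sym ne_ji mul0r.
Qed.

Lemma tensmapE n1 m1 n2 m2 (M1 : 'M[C]_n1 -> 'M[C]_m1) (M2 : 'M[C]_n2 -> 'M[C]_m2)
    X i j p q :
  tensmap M1 M2 X (tidx i p) (tidx j q) =
  \sum_(i' < n1) \sum_(j' < n1) M1 (delta_mx i' j') i j * M2 (block X i' j') p q.
Proof.
rewrite summxE; apply: eq_bigr => i' _; rewrite summxE.
by apply: eq_bigr => j' _; rewrite tensmx_tidx.
Qed.

Lemma tensmap_idE k n m (M : 'M[C]_n -> 'M[C]_m) X i j p q :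
  tensmap (@idmap R k) M X (tidx i p) (tidx j q) = M (block X i j) p q.
Proof.
rewrite tensmapE (bigD1 i) //= [X in _ + X]big1 => [|i' /negPf ne_i'i]; last first.
  by rewrite big1 // => j' _; rewrite mxE eq_sym ne_i'i mul0r.
rewrite addr0 (bigD1 j) //= [X in _ + X]big1 => [|j' /negPf ne_j'j]; last first.
  by rewrite mxE eq_sym ne_j'j andbF mul0r.
by rewrite addr0 mxE !eqxx mul1r.
Qed.

Lemma choi_mxE n m (M : 'M[C]_n -> 'M[C]_m) r p r' q :
  choi_mx M (tidx r p) (tidx r' q) = M (delta_mx r r') p q.
Proof. by rewrite tensmap_idE block_omega_mx. Qed.

Section LinearMap.
Variables (n m : nat) (M : 'M[C]_n -> 'M[C]_m).
Hypothesis M_lin : is_linear_map M.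

Lemma linear_map0 : M 0 = 0.
Proof.
have := M_lin 1 0 0; rewrite !scale1r addr0 => M0.
by apply: (addrI (M 0)); rewrite addr0 -M0.
Qed.

Lemma linear_mapD X Y : M (X + Y) = M X + M Y.
Proof. by have := M_lin 1 X Y; rewrite !scale1r. Qed.

Lemma linear_mapZ a X : M (a *: X) = a *: M X.
Proof. by have := M_lin a X 0; rewrite !addr0 linear_map0 addr0. Qed.

Lemma linear_map_sum (I : finType) (F : I -> 'M[C]_n) :
  M (\sum_i F i) = \sum_i M (F i).
Proof. by apply: (big_morph M); [exact: linear_mapD | exact: linear_map0]. Qed.

Lemma linear_map_expand X : M X = \sum_r \sum_r' X r r' *: M (delta_mx r r').
Proof.
rewrite {1}[X]matrix_sum_delta linear_map_sum; apply: eq_bigr => r _.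
by rewrite linear_map_sum; apply: eq_bigr => r' _; rewrite linear_mapZ.
Qed.

End LinearMap.

Lemma is_linear_tensmap n1 m1 n2 m2 (M1 : 'M[C]_n1 -> 'M[C]_m1)
    (M2 : 'M[C]_n2 -> 'M[C]_m2) :
  is_linear_map M2 -> is_linear_map (tensmap M1 M2).
Proof.
move=> M2_lin c X Y; apply/matrixP => u v.
elim/tidx_ind: u => i p; elim/tidx_ind: v => j q.
rewrite !mxE !tensmapE mulr_sumr -big_split; apply: eq_bigr => i' _.
rewrite mulr_sumr -big_split; apply: eq_bigr => j' _.
have -> : block (c *: X + Y) i' j' = c *: block X i' j' + block Y i' j'.
  by apply/matrixP => k l; rewrite !mxE.
by rewrite M2_lin !mxE mulrDr mulrCA.
Qed.

(* A Gram factorisation [J(M) = B^* B] of the Choi matrix yields the Kraus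
   operators of [M]: the rows of [B], reshaped into [n x m] matrices. *)
Lemma kraus_of_choi_gram n m (M : 'M[C]_n -> 'M[C]_m) (B : 'M[C]_(n * m)) :
  is_linear_map M ->
  (forall u v, choi_mx M u v = \sum_t (B t u)^* * B t v) ->
  let K t : 'M[C]_(n, m) := \matrix_(r, p) B t (tidx r p) in
  forall Y, M Y = \sum_t adjmx (K t) *m Y *m K t.
Proof.
move=> M_lin choi_gram K Y; rewrite (linear_map_expand M_lin); apply/matrixP => p q.
transitivity (\sum_t \sum_r \sum_r' ((B t (tidx r p))^* * Y r r' * B t (tidx r' q))).
  rewrite summxE.
  transitivity (\sum_r \sum_t \sum_r' ((B t (tidx r p))^* * Y r r' * B t (tidx r' q)));
    last by rewrite exchange_big.
  apply: eq_bigr => r _; rewrite summxE.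
  transitivity (\sum_r' \sum_t ((B t (tidx r p))^* * Y r r' * B t (tidx r' q)));
    last by rewrite exchange_big.
  apply: eq_bigr => r' _; rewrite mxE -(choi_mxE M) choi_gram mulr_sumr.
  by apply: eq_bigr => t _; ring.
rewrite summxE; apply: eq_bigr => t _.
rewrite mxE exchange_big; apply: eq_bigr => r _.
rewrite [in RHS]mxE [in RHS]mxE mulr_suml; apply: eq_bigr => r' _.
by rewrite !mxE.
Qed.

Lemma congruence_tens1mx_tidx k n m (L : 'M[C]_(n, m)) (X : 'M[C]_(k * n)) i j p q :
  (adjmx (1%:M *t L : 'M[C]_(k * n, k * m)) *m X *m (1%:M *t L)) (tidx i p) (tidx j q)
  = (adjmx L *m block X i j *m L) p q.
Proof.
rewrite mxE sum_tidx (bigD1 j) //= [X in _ + X]big1 ?addr0 => [|j' /negPf ne_j'j];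
  last first.
  by apply: big1 => r' _; rewrite tens1mx_tidx ne_j'j mul0r mulr0.
rewrite [in RHS]mxE; apply: eq_bigr => r' _; rewrite tens1mx_tidx eqxx mul1r.
congr (_ * _); rewrite [in LHS]mxE [in RHS]mxE sum_tidx (bigD1 i) //=.
rewrite [X in _ + X]big1 ?addr0 => [|i' /negPf ne_i'i]; last first.
  by apply: big1 => r _; rewrite adjmxE tens1mx_tidx ne_i'i mul0r conjC0 mul0r.
by apply: eq_bigr => r _; rewrite !adjmxE tens1mx_tidx eqxx mul1r block_tidx.
Qed.

Lemma cp_of_psd_choi_mx n m (M : 'M[C]_n -> 'M[C]_m) :
  is_linear_map M -> psd (choi_mx M) -> completely_positive M.
Proof.
move=> M_lin /psd_gram [B choi_gram] k X psdX.
pose K t : 'M[C]_(n, m) := \matrix_(r, p) B t (tidx r p).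
suff -> : tensmap (@idmap R k) M X
          = \sum_t adjmx (1%:M *t K t : 'M[C]_(k * n, k * m)) *m X *m (1%:M *t K t).
  by apply: psd_sum => t _; exact: psd_congruence.
apply/matrixP => u v; elim/tidx_ind: u => i p; elim/tidx_ind: v => j q.
rewrite tensmap_idE (kraus_of_choi_gram M_lin choi_gram) !summxE.
by apply: eq_bigr => t _; rewrite congruence_tens1mx_tidx.
Qed.

Lemma psd_choi_mx n m (M : 'M[C]_n -> 'M[C]_m) : completely_positive M -> psd (choi_mx M).
Proof. by move=> M_cp; apply: M_cp; exact: psd_omega_mx. Qed.

Lemma loewner_le_tensmap_of_choi_mx n m (M M' : 'M[C]_n -> 'M[C]_m) (c : C) :
  is_linear_map M -> is_linear_map M' -> loewner_le (choi_mx M) (c *: choi_mx M') ->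
  forall k (X : 'M[C]_(k * n)), psd X ->
  loewner_le (tensmap (@idmap R k) M X) (c *: tensmap (@idmap R k) M' X).
Proof.
move=> M_lin M'_lin choi_le k X psdX.
pose D X := c *: M' X - M X.
have D_lin : is_linear_map D.
  move=> a Y Z; rewrite /D M_lin M'_lin scalerDr scalerBr !scalerA [c * a]mulrC.
  by rewrite opprD addrACA.
have D_cp : completely_positive D.
  apply: cp_of_psd_choi_mx => //; congr psd: choi_le; apply/matrixP => u v.
  by elim/tidx_ind: u => r p; elim/tidx_ind: v => r' q; rewrite !mxE !choi_mxE !mxE.
congr psd: (D_cp k X psdX); apply/matrixP => u v.
by elim/tidx_ind: u => i p; elim/tidx_ind: v => j q; rewrite !mxE !tensmap_idE !mxE.
Qed.

(** * The Choi state and the marginal channel *)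

Lemma ptrace1E m n (X : 'M[C]_(m * n)) p q :
  ptrace1 X p q = \sum_i X (tidx i p) (tidx i q).
Proof. by rewrite summxE; apply: eq_bigr => i _; rewrite block_tidx. Qed.

Lemma is_linear_ptrace1 m n : is_linear_map (@ptrace1 R m n).
Proof.
move=> c X Y; apply/matrixP => p q; rewrite !mxE !ptrace1E mulr_sumr -big_split.
by apply: eq_bigr => i _; rewrite !mxE.
Qed.

Lemma mxtrace_ptrace1 m n (X : 'M[C]_(m * n)) : \tr (ptrace1 X) = \tr X.
Proof.
rewrite /mxtrace [RHS]sum_tidx exchange_big; apply: eq_bigr => p _.
by rewrite ptrace1E.
Qed.

Lemma mxtrace_tensmx m n (A : 'M[C]_m) (B : 'M[C]_n) : \tr (A *t B) = \tr A * \tr B.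
Proof.
rewrite /mxtrace sum_tidx mulr_suml; apply: eq_bigr => i _.
by rewrite mulr_sumr; apply: eq_bigr => j _; rewrite tensmx_tidx.
Qed.

Lemma mxtrace_delta n (i j : 'I_n) : \tr (delta_mx i j : 'M[C]_n) = (i == j)%:R.
Proof.
rewrite /mxtrace (bigD1 i) //= big1 ?addr0 => [|k /negPf ne_ki]; last by rewrite mxE ne_ki.
by rewrite mxE eqxx.
Qed.

Lemma block_delta m n (i j : 'I_m) (k l : 'I_n) (i' j' : 'I_m) :
  block (delta_mx (tidx i k) (tidx j l) : 'M[C]_(m * n)) i' j' =
  ((i' == i) && (j' == j))%:R *: delta_mx k l.
Proof.
by apply/matrixP => p q; rewrite block_tidx !mxE !tidx_eq -natrM mulnb andbACA.
Qed.

Lemma tens1mx_delta k n (r r' : 'I_n) :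
  (1%:M : 'M[C]_k) *t (delta_mx r r' : 'M[C]_n)
  = \sum_(i < k) delta_mx (tidx i r) (tidx i r').
Proof.
apply/matrixP => u v; elim/tidx_ind: u => i p; elim/tidx_ind: v => j q.
rewrite tens1mx_tidx summxE.
rewrite (eq_bigr (fun l => (i == l)%:R * ((j == l) && (p == r) && (q == r'))%:R)).
  by rewrite sum_delta_l mxE -natrM mulnb andbA [j == i]eq_sym.
by move=> l _; rewrite mxE !tidx_eq -natrM mulnb -!andbA [(p == r) && _]andbCA.
Qed.

Lemma swapmid_maxent a b :
  swapmid (maxent R a *t maxent R b) = ((a * b)%:R)^-1 *: omega_mx (a * b).
Proof.
apply/matrixP => u v.
elim/tidx_ind: u => u1 u2; elim/tidx_ind: u1 => ra rb; elim/tidx_ind: u2 => x y.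
elim/tidx_ind: v => v1 v2; elim/tidx_ind: v1 => ra' rb'; elim/tidx_ind: v2 => x' y'.
rewrite swapmid_tidx tensmx_tidx !maxentE !mxE !omega_mxE !tidx_eq.
by rewrite natrM invfM -!natrM -!mulnb; ring.
Qed.

Lemma choi_swapmid a' b' a b (N : 'M[C]_(a' * b') -> 'M[C]_(a * b)) :
  is_linear_map N -> choi N = swapmid (((a' * b')%:R)^-1 *: choi_mx N).
Proof.
by move=> N_lin; rewrite /choi swapmid_maxent (linear_mapZ (is_linear_tensmap _ N_lin)).
Qed.

Lemma choi_mx_replacer_tensmap a' a b' b (Q : 'M[C]_b' -> 'M[C]_b) :
  is_linear_map Q ->
  choi_mx (tensmap (@replacer1 R a' a) Q) = swapmid (1%:M *t choi_mx Q).
Proof.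
move=> Q_lin; apply/matrixP => u v.
elim/tidx_ind: u => u1 u2; elim/tidx_ind: u1 => ra rb; elim/tidx_ind: u2 => x y.
elim/tidx_ind: v => v1 v2; elim/tidx_ind: v1 => ra' rb'; elim/tidx_ind: v2 => x' y'.
rewrite choi_mxE swapmid_tidx tens1mx_tidx tidx_eq choi_mxE tensmapE.
rewrite (eq_bigr (fun i =>
  (ra == i)%:R * ((i == ra')%:R * (x == x')%:R * Q (delta_mx rb rb') y y'))).
  by rewrite sum_delta_l -natrM mulnb.
move=> i _; rewrite (eq_bigr (fun j =>
  (ra' == j)%:R * ((ra == i)%:R * (i == j)%:R * (x == x')%:R * Q (delta_mx rb rb') y y'))).
  by rewrite sum_delta_l; ring.
move=> j _; rewrite block_delta (linear_mapZ Q_lin) /replacer1 mxtrace_delta !mxE.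
by rewrite -mulr_natr -mulnb natrM [i == ra]eq_sym [j == ra']eq_sym; ring.
Qed.

Definition marginal_channel a' b' a b (N : 'M[C]_(a' * b') -> 'M[C]_(a * b))
    : 'M[C]_b' -> 'M[C]_b :=
  fun X => ptrace1 (N ((a'%:R)^-1 *: ((1%:M : 'M[C]_a') *t X))).

Section MarginalChannel.
Variables (a' b' a b : nat) (N : 'M[C]_(a' * b') -> 'M[C]_(a * b)).
Hypothesis N_lin : is_linear_map N.

Lemma is_linear_marginal_channel : is_linear_map (marginal_channel N).
Proof.
move=> c X Y; rewrite /marginal_channel -is_linear_ptrace1 -N_lin.
by rewrite tensmxDr tensmxZr scalerDr !scalerA mulrC.
Qed.

Lemma choi_mx_marginal_channel :
  choi_mx (marginal_channel N) = (a'%:R)^-1 *: ptrace1 (swapmid (choi_mx N)).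
Proof.
apply/matrixP => u v; elim/tidx_ind: u => rb y; elim/tidx_ind: v => rb' y'.
rewrite choi_mxE ptrace1E [RHS]mxE ptrace1E sum_tidx exchange_big [RHS]mulr_sumr.
apply: eq_bigr => z _.
rewrite tens1mx_delta (linear_mapZ N_lin) (linear_map_sum N_lin) mxE summxE; congr (_ * _).
by apply: eq_bigr => al _; rewrite swapmid_tidx choi_mxE.
Qed.

Lemma ptrace1_choi : ptrace1 (choi N) = (b'%:R)^-1 *: choi_mx (marginal_channel N).
Proof.
rewrite choi_swapmid // swapmidZ (linear_mapZ (@is_linear_ptrace1 _ _)).
by rewrite choi_mx_marginal_channel scalerA natrM invfM mulrC.
Qed.

End MarginalChannel.

Lemma marginal_channel_is_channel a' b' a b (N : 'M[C]_(a' * b') -> 'M[C]_(a * b)) :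
  (0 < a')%N -> is_channel N -> is_channel (marginal_channel N).
Proof.
move=> a'_gt0 [N_lin N_cp N_tp]; have M_lin := is_linear_marginal_channel N_lin.
split => // [|X].
  apply: cp_of_psd_choi_mx => //; rewrite choi_mx_marginal_channel //.
  apply: psdZ; first by rewrite invr_ge0 ler0n.
  exact/psd_ptrace1/psd_swapmid/psd_choi_mx.
rewrite mxtrace_ptrace1 N_tp mxtraceZ mxtrace_tensmx mxtrace1 mulrA.
by rewrite mulVf ?mul1r // pnatr_eq0 -lt0n.
Qed.

Lemma mxtrace_choi_mx n m (M : 'M[C]_n -> 'M[C]_m) :
  trace_preserving M -> \tr (choi_mx M) = n%:R.
Proof.
move=> M_tp; rewrite /mxtrace sum_tidx -[n in RHS]card_ord -sumr_const.
apply: eq_bigr => r _; under eq_bigr do rewrite choi_mxE.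
by have := M_tp (delta_mx r r); rewrite mxtrace_delta eqxx.
Qed.

Lemma is_state_choi_mx n m (M : 'M[C]_n -> 'M[C]_m) :
  (0 < n)%N -> is_channel M -> is_state ((n%:R)^-1 *: choi_mx M).
Proof.
move=> n_gt0 [_ M_cp M_tp]; split.
  by apply: psdZ; [rewrite invr_ge0 ler0n | exact: psd_choi_mx].
by rewrite mxtraceZ mxtrace_choi_mx // mulVf // pnatr_eq0 -lt0n.
Qed.

Lemma is_state_swapmid_maxent a' b' :
  (0 < a')%N -> (0 < b')%N -> is_state (swapmid (maxent R a' *t maxent R b')).
Proof.
move=> a'_gt0 b'_gt0; rewrite swapmid_maxent; split.
  by apply: psdZ; [rewrite invr_ge0 ler0n | exact: psd_omega_mx].
by rewrite mxtraceZ mxtrace_omega_mx mulVf // pnatr_eq0 muln_eq0 negb_or -!lt0n a'_gt0.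
Qed.

Section OperatorInequalities.
Variables (a' b' a b : nat) (N : 'M[C]_(a' * b') -> 'M[C]_(a * b)).
Hypotheses (N_lin : is_linear_map N) (a'_gt0 : (0 < a')%N) (b'_gt0 : (0 < b')%N).

Lemma choi_mx_le_replacer_marginal (lam : R) :
  loewner_le (choi N) ((lam%:C)%C *: (1%:M *t ptrace1 (choi N))) ->
  loewner_le (choi_mx N)
    (((lam * a'%:R)%:C)%C *: choi_mx (tensmap (@replacer1 R a' a) (marginal_channel N))).
Proof.
move=> /loewner_le_swapmid.
rewrite ptrace1_choi // choi_swapmid // tensmxZr !swapmidZ swapmidK.
rewrite -choi_mx_replacer_tensmap; last exact: is_linear_marginal_channel.
move=> /(loewner_leZ (c := (a' * b')%:R) (ler0n _ _)).
have ab_neq0 : ((a' * b')%:R : C) != 0.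
  by rewrite pnatr_eq0 muln_eq0 negb_or -!lt0n a'_gt0.
rewrite !scalerA mulfV // scale1r; congr loewner_le; congr (_ *: _).
have b_neq0 : (b'%:R : C) != 0 by rewrite pnatr_eq0 -lt0n.
by rewrite [RHS]rmorphM /= rmorph_nat natrM mulrAC mulfK // mulrC.
Qed.

Lemma choi_le_of_tensmap_maxent (Q : 'M[C]_b' -> 'M[C]_b) (lam : R) :
  is_linear_map Q ->
  let Phi := swapmid (maxent R a' *t maxent R b') in
  loewner_le (tensmap (@idmap R (a' * b')) N Phi)
    ((lam%:C)%C *: tensmap (@idmap R (a' * b')) (tensmap (@replacer1 R a' a) Q) Phi) ->
  loewner_le (choi N) (((lam / a'%:R)%:C)%C *: (1%:M *t ((b'%:R)^-1 *: choi_mx Q))).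
Proof.
move=> Q_lin Phi; rewrite /Phi swapmid_maxent.
rewrite (linear_mapZ (is_linear_tensmap _ N_lin)).
rewrite (linear_mapZ (is_linear_tensmap _ (is_linear_tensmap _ Q_lin))).
rewrite -[tensmap _ N _]/(choi_mx N) -[tensmap _ (tensmap _ Q) _]/(choi_mx (tensmap _ Q)).
move=> /loewner_le_swapmid; rewrite -choi_swapmid // choi_mx_replacer_tensmap //.
rewrite !swapmidZ swapmidK tensmxZr !scalerA; congr loewner_le; congr (_ *: _).
by rewrite [in RHS]rmorphM /= fmorphV /= rmorph_nat natrM invfM mulrA.
Qed.

End OperatorInequalities.

(** * Min-entropies *)

Lemma log2M (x y : R) : 0 < x -> 0 < y -> log2 (x * y) = log2 x + log2 y.
Proof. by move=> x_gt0 y_gt0; rewrite /log2 lnM ?posrE // mulrDl. Qed.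

Lemma Dmax_le_log2 n (rho sigma : 'M[C]_n) (lam : R) :
  0 < lam -> loewner_le rho ((lam%:C)%C *: sigma) -> (Dmax rho sigma <= (log2 lam)%:E)%E.
Proof. by move=> lam_gt0 rho_le; apply: ereal_inf_lbound; exists lam. Qed.

Section ChannelEntropyBounds.
Variables (a' b' a b : nat) (N : 'M[C]_(a' * b') -> 'M[C]_(a * b)).
Hypotheses (N_ch : is_channel N) (a'_gt0 : (0 < a')%N) (b'_gt0 : (0 < b')%N).

Let N_lin : is_linear_map N. Proof. by case: N_ch. Qed.
Let log2_a' := (log2 (a'%:R : R))%:E.
Let a'_pos : 0 < (a'%:R : R). Proof. by rewrite ltr0n. Qed.

Lemma Smin_down_choi_le_Smin_ch : (Smin_down (choi N) - log2_a' <= Smin_ch N)%E.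
Proof.
rewrite /Smin_down /Smin_ch -oppeD ?fin_num_adde_defl // leeN2.
pose T := tensmap (@replacer1 R a' a) (marginal_channel N).
apply: (@le_trans _ _ (Dmax_ch N T)).
  apply: ereal_inf_lbound; exists (marginal_channel N) => //.
  exact: marginal_channel_is_channel.
apply: ge_ereal_sup => _ [k [rho [[rho_psd _] ->]]].
rewrite -leeBlDr //; apply: le_ereal_inf_tmp => _ [lam [lam_gt0 choi_le] <-].
rewrite leeBlDr // -EFinD -log2M //; apply: Dmax_le_log2; first exact: mulr_gt0.
apply: loewner_le_tensmap_of_choi_mx => //.
  exact/is_linear_tensmap/is_linear_marginal_channel.
exact: choi_mx_le_replacer_marginal.
Qed.

Lemma Smin_ch_le_Smin_choi : (Smin_ch N <= Smin (choi N) - log2_a')%E.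
Proof.
rewrite /Smin_ch /Smin -oppeD ?fin_num_adde_defl // leeN2.
apply: le_ereal_inf_tmp => _ [Q Q_ch <-]; have [Q_lin _ _] := Q_ch.
pose Phi := swapmid (maxent R a' *t maxent R b').
apply: (@le_trans _ _ (Dmax (tensmap (@idmap R (a' * b')) N Phi)
    (tensmap (@idmap R (a' * b')) (tensmap (@replacer1 R a' a) Q) Phi))).
  apply: le_ereal_inf_tmp => _ [lam [lam_gt0 Phi_le] <-].
  pose sigma := (b'%:R)^-1 *: choi_mx Q.
  rewrite -leeBrDr //; apply: (@le_trans _ _ (Dmax (choi N) (1%:M *t sigma))).
    by apply: ereal_inf_lbound; exists sigma => //; exact: is_state_choi_mx.
  rewrite -EFinB -[X in log2 X](divfK (lt0r_neq0 a'_pos)) log2M ?divr_gt0 // addrK.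
  by apply: Dmax_le_log2; [exact: divr_gt0 | exact: choi_le_of_tensmap_maxent].
apply: ereal_sup_ubound; exists (a' * b')%N, Phi; split => //.
exact: is_state_swapmid_maxent.
Qed.

End ChannelEntropyBounds.

End QuantumChannels.

Theorem proposition5 (R : realType) (a' b' a b : nat) (ha' : (0 < a')%N) (hb' : (0 < b')%N)
    (N : 'M[R[i]]_(a' * b') -> 'M[R[i]]_(a * b)) (hN : is_channel N) :
  ((Smin_down (choi N) - (log2 (a'%:R : R))%:E <= Smin_ch N)%E /\
   (Smin_ch N <= Smin (choi N) - (log2 (a'%:R : R))%:E)%E).
Proof.
split; [exact: Smin_down_choi_le_Smin_ch | exact: Smin_ch_le_Smin_choi].
Qed.
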